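(* Let $N\ge1$, $V=\{1,\dots,N\}$, $A$ an $N\times N$ row-stochastic matrix, and $\sigma_1,\sigma_2,\dots$ random variables with values in $V$. Consider $x(k+1)=A_{\sigma_k}x(k)$, $k\ge1$, with deterministic $x(1)\in\mathbb R^N$. Suppose: (a) $\mathcal G(A)$ is rooted. (b) There exists $\alpha>0$ such that whenever $\mathbb P(\sigma_k\mid\sigma_{k-1},\dots,\sigma_1)\neq0$, it is $\ge\alpha$. (c) For every $k\ge1$ there is $\mathscr I_k\subseteq V$ such that $\{\sigma:\mathbb P(\sigma_k=\sigma\mid\sigma_{k-1},\dots,\sigma_1)\neq0\}=\mathscr I_k$ for all past values $(\sigma_{k-1},\dots,\sigma_1)\in V^{k-1}$. (d) There exists $q>0$ with $\bigcup_{\tau=k}^{k+q-1}\mathscr I_\tau=V$ for all $k\ge1$. (e) There exists a nonempty $\chi\subseteq\mathbbm r(A)$ (a strongly connected component of $\mathbbm r(A)$, i.e. the subgraph of $\mathcal G(A)$ induced by $\chi$ is strongly connected) with $\chi\subseteq\mathscr I_k$ for all $k\ge1$. Then the iteration reaches consensus almost surely.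
   Context: $\mathcal G(A)$ is the directed graph on $V$ with an edge $(j,i)$ iff $a_{ij}>0$; it is rooted if some node $r$ has a directed path to every other node, and $\mathbbm r(A)$ is the set of such roots. For $\sigma\in V$, $A_\sigma$ is the identity matrix with its $\sigma$-th row replaced by the $\sigma$-th row of $A$. For $k=1$ conditional probabilities given the empty past are unconditional. The iteration reaches consensus almost surely if for every $\varepsilon>0$ and every $x(1)$, $\lim_{k\to\infty}\mathbb P\big(\sum_{j=1}^N (x_j(k)-\frac1N\sum_{i=1}^N x_i(k))^2\ge\varepsilon\big)=0$. *)

From HB Require Import structures.
From mathcomp Require Import all_boot all_order all_algebra.
From mathcomp Require Import all_classical all_reals all_analysis.
Set Implicit Arguments. Unset Strict Implicit. Unset Printing Implicit Defensive.
Import Order.TTheory GRing.Theory Num.Theory.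
Local Open Scope classical_set_scope.
Local Open Scope ring_scope.

(* Nodes V = {1..N} are 'I_N. *)

Section Defs.
Context {R : realType} {N : nat}.

Definition row_stochastic (A : 'M[R]_N) : Prop :=
  (forall i j, 0 <= A i j) /\ (forall i, \sum_j A i j = 1).

Definition gedge (A : 'M[R]_N) : rel 'I_N := fun j i => 0 < A i j.

Definition root_set (A : 'M[R]_N) : {set 'I_N} :=
  [set r | [forall i, connect (gedge A) r i]].

Definition rooted (A : 'M[R]_N) : Prop := exists r, r \in root_set A.

Definition induced_strongly_connected (A : 'M[R]_N) (chi : {set 'I_N}) : Prop :=
  forall i j, i \in chi -> j \in chi ->
    connect (fun a b => [&& a \in chi, b \in chi & gedge A a b]) i j.

(* A_sigma: identity with its sigma-th row replaced by the sigma-th row of A *)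
Definition Asub (A : 'M[R]_N) (s : 'I_N) : 'M[R]_N :=
  \matrix_(i, j) (if i == s then A i j else (i == j)%:R).

(* trajectory: traj A sigma x1 n t = x(n+1) with x(1) = x1 and
   x(k+1) = A_{sigma_k} x(k) *)
Fixpoint traj {T : Type} (A : 'M[R]_N) (sigma : nat -> T -> 'I_N)
    (x1 : 'cV[R]_N) (n : nat) (t : T) : 'cV[R]_N :=
  match n with
  | 0 => x1
  | n'.+1 => Asub A (sigma n'.+1 t) *m traj A sigma x1 n' t
  end.

Definition disagreement (x : 'cV[R]_N) : R :=
  \sum_j (x j 0 - N%:R^-1 * \sum_i x i 0) ^+ 2.

End Defs.

Section Prob.
Context {d : measure_display} {T : measurableType d} {R : realType}.

Definition condP (P : probability T R) (A B : set T) : R :=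
  fine (P (A `&` B)) / fine (P B).

(* the event {sigma_{k-1} = past_{k-1}, ..., sigma_1 = past_1},
   past : 'I_(k-1) -> V, past i = value of sigma_(i+1) *)
Definition past_event {N : nat} (sigma : nat -> T -> 'I_N) (k : nat)
    (past : {ffun 'I_k.-1 -> 'I_N}) : set T :=
  [set t | forall i : 'I_k.-1, sigma i.+1 t = past i].

Definition cur_event {N : nat} (sigma : nat -> T -> 'I_N) (k : nat) (s : 'I_N)
  : set T := [set t | sigma k t = s].

End Prob.
Arguments past_event {d T N} sigma k past.
Arguments cur_event {d T N} sigma k s.

(* Let [spread x] be max_(i,j) (x_i - x_j).  Every A_s is row-stochastic, so the spread
   never increases.  Fix a root r in chi, allowed at every time, and an in-neighbour c of r.
   From any time k on there is an admissible word of length N q after which every row of the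
   product puts weight at least a^(N q) on column c, a being the least positive entry of A:
   the set of such rows grows along the edges leaving c, by one node per window of length q
   given by (d), while r is updated in the remaining slots.  Such a product contracts the
   spread by a fixed factor g < 1.  By (b) and (c) every admissible word of length N q has
   conditional probability at least alpha^(N q) given any history, so the expected squared
   spread decays geometrically; Markov's inequality and disagreement <= N spread^2 conclude. *)

From mathcomp Require Import all_boot all_order all_algebra.
From mathcomp Require Import all_classical all_reals all_analysis.
From mathcomp Require Import ring lra zify.
Import Order.TTheory GRing.Theory Num.Theory numFieldNormedType.Exports.
Local Open Scope classical_set_scope.
Local Open Scope ring_scope.
Set Implicit Arguments.
Unset Strict Implicit.

(** * Spread and row-stochastic matrices *)

Section Spread.
Context {R : realDomainType} {N : nat}.
Implicit Types x : 'cV[R]_N.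

Definition spread x : R := \big[Num.max/0]_i \big[Num.max/0]_j (x i 0 - x j 0).

Lemma spread_ub x i j : x i 0 - x j 0 <= spread x.
Proof.
apply: le_trans (le_bigmax _ _ i).
exact: (le_bigmax _ (fun j => x i 0 - x j 0) j).
Qed.

Lemma spread_ge0 x : 0 <= spread x.
Proof. by rewrite /spread bigmax_idl le_max lexx. Qed.

Lemma spread_le x b : 0 <= b -> (forall i j, x i 0 - x j 0 <= b) -> spread x <= b.
Proof. by move=> b0 xb; do 2![apply: bigmax_le => // ? _]. Qed.

End Spread.

Section RowStochastic.
Context {R : realType} {N : nat}.
Implicit Types (W : 'M[R]_N) (x : 'cV[R]_N).

Lemma row_stochastic1 : row_stochastic (1%:M : 'M[R]_N).
Proof.
split=> [i j|i]; first by rewrite mxE ler0n.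
by rewrite (bigD1 i) //= mxE eqxx big1 ?addr0 // => j; rewrite mxE eq_sym => /negPf->.
Qed.

Lemma row_stochastic_mul W1 W2 :
  row_stochastic W1 -> row_stochastic W2 -> row_stochastic (W1 *m W2).
Proof.
move=> [W1_ge0 W1_sum] [W2_ge0 W2_sum]; split=> [i j|i].
  by rewrite mxE; apply: sumr_ge0 => k _; apply: mulr_ge0.
under eq_bigr do rewrite mxE.
rewrite exchange_big /= -[RHS](W1_sum i); apply: eq_bigr => k _.
by rewrite -big_distrr /= W2_sum mulr1.
Qed.

Lemma row_stochastic_Asub (A : 'M[R]_N) s : row_stochastic A -> row_stochastic (Asub A s).
Proof.
move=> [A_ge0 A_sum]; split=> [i j|i]; rewrite /Asub.
  by rewrite mxE; case: eqP => _ //; rewrite ler0n.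
under eq_bigr do rewrite mxE.
case: eqP => _; first exact: A_sum.
by rewrite (bigD1 i) //= eqxx big1 ?addr0 // => j; rewrite eq_sym => /negPf->.
Qed.

Lemma row_stochastic_mulmx_sub W x i j : row_stochastic W ->
  (W *m x) i 0 - (W *m x) j 0 = \sum_k \sum_l W i k * W j l * (x k 0 - x l 0).
Proof.
move=> [_ W_sum]; rewrite !mxE.
have -> : \sum_k \sum_l W i k * W j l * (x k 0 - x l 0) =
    \sum_k \sum_l W i k * W j l * x k 0 - \sum_l \sum_k W i k * W j l * x l 0.
  rewrite [X in _ - X]exchange_big /= -sumrB.
  by apply: eq_bigr => k _; rewrite -sumrB; apply: eq_bigr => l _; ring.
congr (_ - _); apply: eq_bigr => k _.
  by rewrite -[LHS]mulr1 -(W_sum j) big_distrr /=; apply: eq_bigr => l _; ring.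
by rewrite -[LHS]mulr1 -(W_sum i) big_distrr /=; apply: eq_bigr => l _; ring.
Qed.

(* The diagonal terms vanish, and their total weight is at least [W i c * W j c]. *)
Lemma row_stochastic_mulmx_sub_le W x i j c : row_stochastic W ->
  (W *m x) i 0 - (W *m x) j 0 <= spread x * (1 - W i c * W j c).
Proof.
move=> W_stoch; have [W_ge0 W_sum] := W_stoch.
rewrite row_stochastic_mulmx_sub //.
have off_diag k : \sum_l W i k * W j l * (1 - (k == l)%:R) = W i k * (1 - W j k).
  rewrite (bigD1 k) //= eqxx subrr mulr0 add0r.
  under eq_bigr => l /negPf lk do rewrite eq_sym lk subr0 mulr1.
  rewrite -big_distrr /=; congr (_ * _).
  by rewrite -(W_sum j) [in RHS](bigD1 k) //= addrAC subrr add0r.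
apply: (@le_trans _ _ (spread x * \sum_k \sum_l W i k * W j l * (1 - (k == l)%:R))).
  rewrite big_distrr; apply: ler_sum => k _; rewrite big_distrr; apply: ler_sum => l _ /=.
  rewrite mulrCA ler_wpM2l ?mulr_ge0 //.
  by case: eqP => [->|_]; rewrite ?subrr ?mulr0 // subr0 mulr1 spread_ub.
apply: ler_wpM2l; first exact: spread_ge0.
under eq_bigr do rewrite off_diag mulrBr mulr1.
rewrite sumrB W_sum lerD2l lerN2 (bigD1 c) //= lerDl.
by apply: sumr_ge0 => k _; apply: mulr_ge0.
Qed.

Lemma spread_row_stochastic W x : row_stochastic W -> spread (W *m x) <= spread x.
Proof.
move=> W_stoch; apply: spread_le => [|i j]; first exact: spread_ge0.
apply: le_trans (row_stochastic_mulmx_sub_le x i j i W_stoch) _.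
have [W_ge0 _] := W_stoch.
by rewrite ler_piMr ?spread_ge0 // gerBl mulr_ge0.
Qed.

Lemma row_stochastic_le1 W i j : row_stochastic W -> W i j <= 1.
Proof.
move=> [W_ge0 W_sum]; rewrite -(W_sum i) (bigD1 j) //= lerDl.
by apply: sumr_ge0 => k _.
Qed.

Lemma spread_row_stochastic_col W x c e : row_stochastic W -> 0 <= e ->
  (forall i, e <= W i c) -> spread (W *m x) <= (1 - e ^+ 2) * spread x.
Proof.
move=> W_stoch e_ge0 eW.
have e_le1 : e <= 1 := le_trans (eW c) (row_stochastic_le1 c c W_stoch).
apply: spread_le => [|i j].
  by rewrite mulr_ge0 ?spread_ge0 // subr_ge0 expr_le1.
apply: le_trans (row_stochastic_mulmx_sub_le x i j c W_stoch) _.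
rewrite mulrC ler_wpM2r ?spread_ge0 // lerD2l lerN2 expr2.
by apply: ler_pM.
Qed.

End RowStochastic.

(** * Products along admissible words *)

Section Products.
Context {R : realType} {N : nat} (A : 'M[R]_N).

Definition Aprod (w : seq 'I_N) : 'M[R]_N := foldl (fun M s => Asub A s *m M) 1%:M w.

Lemma Aprod_nil : Aprod [::] = 1%:M.
Proof. by []. Qed.

Lemma Aprod_rcons w s : Aprod (rcons w s) = Asub A s *m Aprod w.
Proof. by rewrite /Aprod foldl_rcons. Qed.

Lemma Aprod_cat u w : Aprod (u ++ w) = Aprod w *m Aprod u.
Proof.
elim/last_ind: w => [|w s IHw]; first by rewrite cats0 Aprod_nil mul1mx.
by rewrite -rcons_cat !Aprod_rcons IHw mulmxA.
Qed.

Lemma row_stochastic_Aprod w : row_stochastic A -> row_stochastic (Aprod w).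
Proof.
move=> A_stoch; elim/last_ind: w => [|w s IHw]; first exact: row_stochastic1.
by rewrite Aprod_rcons; apply: row_stochastic_mul => //; apply: row_stochastic_Asub.
Qed.

Lemma Asub_mulmxE s (W : 'M[R]_N) i j :
  (Asub A s *m W) i j = if i == s then \sum_k A s k * W k j else W i j.
Proof.
rewrite mxE; have [->|ne] := eqVneq i s.
  by apply: eq_bigr => k _; rewrite mxE eqxx.
rewrite (bigD1 i) //= mxE (negPf ne) eqxx mul1r big1 ?addr0 // => k ki.
by rewrite mxE (negPf ne) eq_sym (negPf ki) mul0r.
Qed.

End Products.

Section Admissible.
Context {N : nat} (I : nat -> {set 'I_N}).

Fixpoint admissible (k : nat) (w : seq 'I_N) : Prop :=
  if w is s :: w' then s \in I k /\ admissible k.+1 w' else True.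

Lemma admissible_cat k u w :
  admissible k u -> admissible (k + size u) w -> admissible k (u ++ w).
Proof.
elim: u k => [|s u IHu] k /=; first by rewrite addn0.
by move=> [sI Iu] Iw; split=> //; apply: IHu; rewrite // addSnnS.
Qed.

Lemma admissible_nseq k n s : (forall j, (k <= j)%N -> s \in I j) -> admissible k (nseq n s).
Proof.
elim: n k => [|n IHn] k sI //=; split; first exact: sI.
by apply: IHn => j kj; apply: sI; apply: ltnW.
Qed.

End Admissible.

Lemma bigcup_nat_mem {T : finType} m n (F : nat -> {set T}) x :
  x \in \bigcup_(m <= i < n) F i -> exists2 i, (m <= i < n)%N & x \in F i.
Proof.
rewrite big_seq_cond; elim/big_rec: _ => [|i X /andP[i_mn _] IHX]; first by rewrite inE.
by rewrite finset.in_setU => /orP[xF|/IHX //]; exists i; rewrite -?mem_index_iota.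
Qed.

Lemma connect_exit {T : finType} (e : rel T) (S : {set T}) x y :
  connect e x y -> x \in S -> y \notin S -> exists a b, [/\ a \in S, b \notin S & e a b].
Proof.
move=> /connectP [p + ->]; elim: p x => [|z p IHp] x /= => [_ xS|/andP[exz zp] xS yS].
  by rewrite xS.
have [zS|zS] := boolP (z \in S); first exact: IHp zp zS yS.
by exists x, z.
Qed.

Section ColumnGrowth.
Context {R : realType} {N : nat} (A : 'M[R]_N) (a : R) (c : 'I_N).
Hypotheses (A_stoch : row_stochastic A) (a_gt0 : 0 < a) (a_le1 : a <= 1)
  (a_le : forall i j, 0 < A i j -> a <= A i j).
Implicit Types (S : {set 'I_N}) (u w : seq 'I_N).
Let a_ge0 : 0 <= a := ltW a_gt0.

Definition col_bounded (S : {set 'I_N}) (w : seq 'I_N) :=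
  forall i, i \in S -> a ^+ size w <= Aprod A w i c.

Lemma col_bounded_subset S S' w : col_bounded S w -> S' \subset S -> col_bounded S' w.
Proof. by move=> Sw /fintype.subsetP S'S i /S'S; apply: Sw. Qed.

Lemma col_bounded_rcons S w s j :
  col_bounded S w -> j \in S -> 0 < A s j -> col_bounded (s |: S) (rcons w s).
Proof.
move=> Sw jS Asj i; rewrite in_setU1 Aprod_rcons Asub_mulmxE size_rcons exprS.
have [A_ge0 _] := A_stoch; have [W_ge0 _] := row_stochastic_Aprod w A_stoch.
have [_ _|ne /= iS] := eqVneq i s.
  apply: le_trans (_ : A s j * Aprod A w j c <= _).
    by apply: ler_pM; rewrite ?exprn_ge0 ?a_le ?Sw.
  by rewrite (bigD1 j) //= lerDl sumr_ge0 // => k _; rewrite mulr_ge0.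
by apply: le_trans (Sw _ iS); rewrite ler_piMl ?exprn_ge0.
Qed.

Lemma col_bounded_pad S w r n :
  c \in S -> 0 < A r c -> col_bounded S w -> col_bounded S (w ++ nseq n r).
Proof.
move=> cS Arc; elim: n w => [|n IHn] w Sw; first by rewrite cats0.
rewrite -cat_rcons; apply/IHn/(col_bounded_subset (col_bounded_rcons Sw cS Arc)).
exact: finset.subsetUr.
Qed.

Variables (I : nat -> {set 'I_N}) (q : nat) (r : 'I_N).
Hypotheses (r_in_I : forall k, (1 <= k)%N -> r \in I k) (A_rc : 0 < A r c)
  (I_cover : forall k, (1 <= k)%N -> \bigcup_(k <= tau < k + q) I tau = [set: 'I_N]%SET)
  (c_root : forall y, connect (gedge A) c y).

Lemma admissible_root k n : (1 <= k)%N -> admissible I k (nseq n r).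
Proof. by move=> k1; apply: admissible_nseq => j kj; apply/r_in_I/(leq_trans k1). Qed.

Lemma col_bounded_window S u k v j : (1 <= k)%N -> c \in S -> col_bounded S u ->
  j \in S -> 0 < A v j ->
  exists w, [/\ admissible I k w, size w = q & col_bounded (v |: S) (u ++ w)].
Proof.
move=> k1 cS Su jS Avj.
have [tau /andP[k_tau tau_kq] v_tau] : exists2 tau, (k <= tau < k + q)%N & v \in I tau.
  by apply: bigcup_nat_mem; rewrite I_cover // inE.
exists (nseq (tau - k) r ++ v :: nseq (k + q - tau.+1) r); split.
- apply: admissible_cat; first exact: admissible_root.
  rewrite size_nseq subnKC //=; split=> //.
  by apply: admissible_root; lia.
- by rewrite size_cat /= !size_nseq; lia.
rewrite catA -cat_rcons; apply: col_bounded_pad => //.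
  by rewrite in_setU1 cS orbT.
exact: col_bounded_rcons (col_bounded_pad _ cS A_rc Su) jS Avj.
Qed.

Lemma col_bounded_full u k n : (1 <= k)%N -> col_bounded [set: 'I_N]%SET u ->
  exists w, [/\ admissible I k w, size w = n & col_bounded [set: 'I_N]%SET (u ++ w)].
Proof.
move=> k1 Tu; exists (nseq n r); split; first exact: admissible_root.
  exact: size_nseq.
by apply: col_bounded_pad; rewrite ?inE.
Qed.

Lemma col_bounded_grow m S u k : (1 <= k)%N -> c \in S -> (#|~: S| <= m)%N ->
  col_bounded S u ->
  exists w, [/\ admissible I k w, size w = (m * q)%N & col_bounded [set: 'I_N]%SET (u ++ w)].
Proof.
elim: m S u k => [|m IHm] S u k k1 cS cardS Su;
  case: (pickP [pred y | y \notin S]) => [y /= yS|S_full];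
  try by apply: col_bounded_full => //; apply: (col_bounded_subset Su);
    apply/fintype.subsetP => i _; move/negbFE: (S_full i).
  by move: cardS; rewrite leqn0 cards_eq0 => /eqP/setP/(_ y); rewrite !inE yS.
have [a' [b [a'S bS Aba']]] := connect_exit (c_root y) cS yS.
have [w1 [I_w1 size_w1 bSu]] := col_bounded_window k1 cS Su a'S Aba'.
have cbS : c \in b |: S by rewrite in_setU1 cS orbT.
have card_bS : (#|~: (b |: S)| <= m)%N.
  have -> : ~: (b |: S) = ~: S :\ b by apply/setP => i; rewrite !inE negb_or.
  by move: cardS; rewrite (cardsD1 b (~: S)) inE bS.
have [w2 [I_w2 size_w2 Tw]] := IHm _ _ (k + q)%N ltac:(lia) cbS card_bS bSu.
exists (w1 ++ w2); split; first by apply: admissible_cat; rewrite ?size_w1.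
  by rewrite size_cat size_w1 size_w2 mulSn.
by rewrite catA.
Qed.

Lemma contracting_words : exists2 g, 0 <= g < 1 & forall k, (1 <= k)%N ->
  exists w, [/\ admissible I k w, size w = (N * q)%N &
    forall x, spread (Aprod A w *m x) <= g * spread x].
Proof.
pose e := a ^+ (N * q); have e_gt0 : 0 < e by rewrite exprn_gt0.
have e_le1 : e <= 1 by rewrite exprn_ile1.
exists (1 - e ^+ 2); first by apply/andP; split; nra.
move=> k k1; have c_bounded : col_bounded [set c] [::].
  by move=> i; rewrite inE => /eqP->; rewrite Aprod_nil mxE eqxx expr0.
have cardC : (#|~: [set c]| <= N)%N by rewrite (leq_trans (max_card _)) ?card_ord.
have [w [I_w size_w Tw]] := col_bounded_grow k1 (set11 c) cardC c_bounded.
exists w; split=> // x; apply: spread_row_stochastic_col (ltW e_gt0) _.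
  exact: row_stochastic_Aprod.
by move=> i; rewrite /e -size_w; apply: Tw; rewrite inE.
Qed.

End ColumnGrowth.

(** * Sums over the tree of words *)

Section TreeSums.
Context {R : realDomainType} {N : nat}.
Implicit Types (F G : seq 'I_N -> R) (u v w : seq 'I_N).

(* With [p] the probabilities of histories, [tree_sum m (fun v => p v * F v) [::]] is the
   expectation of [F] at the history of length [m]. *)
Fixpoint tree_sum m F u : R :=
  if m is m'.+1 then \sum_s tree_sum m' F (rcons u s) else F u.

Lemma tree_sumD m n F u : tree_sum (m + n) F u = tree_sum m (tree_sum n F) u.
Proof. by elim: m u => [|m IHm] u //=; apply: eq_bigr => s _; rewrite IHm. Qed.

Lemma ler_tree_sum m F G u : (forall v, F v <= G v) -> tree_sum m F u <= tree_sum m G u.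
Proof. by move=> FG; elim: m u => [|m IHm] u //=; apply: ler_sum => s _. Qed.

Lemma tree_sumZ m a F u : tree_sum m (fun v => a * F v) u = a * tree_sum m F u.
Proof.
elim: m u => [|m IHm] u //=.
by rewrite big_distrr /=; apply: eq_bigr => s _; rewrite IHm.
Qed.

Lemma tree_sum_ge0 m F u : (forall v, 0 <= F v) -> 0 <= tree_sum m F u.
Proof. by move=> F_ge0; elim: m u => [|m IHm] u //=; apply: sumr_ge0. Qed.

Lemma tree_sum_geometric L rho F m u : 0 <= rho ->
  (forall v, tree_sum L F v <= rho * F v) -> tree_sum (m * L) F u <= rho ^+ m * F u.
Proof.
move=> rho_ge0 F_contr; elim: m u => [|m IHm] u; first by rewrite mul1r.
rewrite mulSnr tree_sumD; apply: le_trans (ler_tree_sum _ _ F_contr) _.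
by rewrite tree_sumZ exprS -mulrA; apply: ler_wpM2l.
Qed.

Variable p : seq 'I_N -> R.
Hypotheses (p_ge0 : forall u, 0 <= p u) (p_sum : forall u, p u = \sum_s p (rcons u s)).

Lemma p_rcons_le u s : p (rcons u s) <= p u.
Proof. by rewrite [leRHS]p_sum (bigD1 s) //= lerDl sumr_ge0. Qed.

Lemma p_cat_le u w : p (u ++ w) <= p u.
Proof.
elim: w u => [|s w IHw] u; first by rewrite cats0.
by rewrite -cat_rcons (le_trans (IHw _)) ?p_rcons_le.
Qed.

Lemma p_cat_ge a (I : nat -> {set 'I_N}) u w : 0 <= a ->
  (forall v s, s \in I (size v).+1 -> a * p v <= p (rcons v s)) ->
  admissible I (size u).+1 w -> a ^+ size w * p u <= p (u ++ w).
Proof.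
move=> a_ge0 p_step; elim: w u => [|s w IHw] u /=; first by rewrite mul1r cats0.
move=> [sI Iw]; rewrite -cat_rcons.
apply: le_trans (IHw _ _); last by rewrite size_rcons.
by rewrite exprSr -mulrA; apply: ler_wpM2l (p_step _ _ sI); rewrite exprn_ge0.
Qed.

Variable h : seq 'I_N -> R.
Hypotheses (h_ge0 : forall u, 0 <= h u) (h_rcons : forall u s, h (rcons u s) <= h u).
Let ph v := p v * h v.

Lemma tree_sum_ph_le m u : tree_sum m ph u <= p u * h u.
Proof.
elim: m u => [|m IHm] u //=; rewrite [in leRHS]p_sum big_distrl /=.
by apply: ler_sum => s _; apply: le_trans (IHm _) (ler_wpM2l (p_ge0 _) (h_rcons _ _)).
Qed.

(* Along the branch [u ++ w] the value of [h] at the leaf is used; every other branch is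
   bounded by [h u]. *)
Lemma tree_sum_ph_branch w u :
  tree_sum (size w) ph u <= p u * h u - p (u ++ w) * (h u - h (u ++ w)).
Proof.
elim: w u => [|s w IHw] u /=; first by rewrite cats0 subrr mulr0 subr0.
rewrite (bigD1 s) //= -cat_rcons; set us := rcons u s.
have others : \sum_(s' | s' != s) tree_sum (size w) ph (rcons u s') <= (p u - p us) * h u.
  rewrite [p u]p_sum [in leRHS](bigD1 s) //= addrAC subrr add0r big_distrl /=.
  apply: ler_sum => s' _.
  exact: le_trans (tree_sum_ph_le _ _) (ler_wpM2l (p_ge0 _) (h_rcons _ _)).
apply: le_trans (lerD (IHw us) others) _.
suff -> : p u * h u - p (us ++ w) * (h u - h (us ++ w)) =
    p us * h us - p (us ++ w) * (h us - h (us ++ w)) + (p u - p us) * h u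
    + (p us - p (us ++ w)) * (h u - h us).
  by rewrite lerDl mulr_ge0 // subr_ge0 ?p_cat_le ?h_rcons.
ring.
Qed.

Lemma tree_sum_ph_contract a g w u : 0 <= a -> g <= 1 ->
  a * p u <= p (u ++ w) -> h (u ++ w) <= g * h u ->
  tree_sum (size w) ph u <= (1 - a * (1 - g)) * (p u * h u).
Proof.
move=> a_ge0 g_le1 p_uw h_uw; apply: le_trans (tree_sum_ph_branch w u) _.
have : a * p u * ((1 - g) * h u) <= p (u ++ w) * (h u - h (u ++ w)).
  apply: ler_pM; rewrite ?mulr_ge0 ?subr_ge0 //; lra.
lra.
Qed.

End TreeSums.

Lemma nonincreasing_geometric_cvg0 {R : realType} (E : R^nat) L rho :
  0 <= rho < 1 -> (forall n, 0 <= E n) -> {homo E : m n / (m <= n)%N >-> n <= m} ->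
  (forall m, E (m * L)%N <= rho ^+ m * E 0%N) -> E @ \oo --> 0.
Proof.
move=> /andP[rho_ge0 rho_lt1] E_ge0 E_nonincr E_geom.
apply/cvgrPdist_le => e e_gt0.
have /cvgrPdist_le/(_ (e / (E 0%N + 1))) : (GRing.exp rho : R^nat) @ \oo --> 0.
  by apply: cvg_expr; rewrite ger0_norm.
case=> [|M _ rhoM]; first by rewrite divr_gt0 // ltr_wpDl.
exists (M * L)%N => // n /= Mn; rewrite sub0r normrN ger0_norm //.
apply: le_trans (E_nonincr _ _ Mn) _; apply: le_trans (E_geom M) _.
have := rhoM M (leqnn M); rewrite /= sub0r normrN ger0_norm ?exprn_ge0 // => rhoM_le.
rewrite -(@ler_pM2r _ (E 0%N + 1)) ?ltr_wpDl // in rhoM_le.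
rewrite divfK ?lt0r_neq0 ?ltr_wpDl // in rhoM_le.
apply: le_trans rhoM_le; rewrite ler_wpM2l ?exprn_ge0 //; lra.
Qed.

(** * Probabilities of histories *)

Section History.
Context {T : Type} {N : nat} (sigma : nat -> T -> 'I_N).

Definition history n t := [seq sigma i.+1 t | i <- iota 0 n].

Lemma historyS n t : history n.+1 t = rcons (history n t) (sigma n.+1 t).
Proof.
rewrite /history (_ : iota 0 n.+1 = rcons (iota 0 n) n) ?map_rcons //.
by rewrite -cats1 -addn1 iotaD.
Qed.

Lemma size_history n t : size (history n t) = n.
Proof. by rewrite size_map size_iota. Qed.

Lemma traj_history {R : realType} (A : 'M[R]_N) x1 n t :
  traj A sigma x1 n t = Aprod A (history n t) *m x1.
Proof.
elim: n => [|n IHn]; first by rewrite Aprod_nil mul1mx.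
by rewrite /= IHn historyS Aprod_rcons mulmxA.
Qed.

End History.

Lemma bigsetU_ordP {T : Type} n (F : 'I_n -> set T) t :
  (\big[setU/set0]_(i < n) F i) t <-> exists i, F i t.
Proof.
split; last by move=> [i Fit]; rewrite (bigD1 i) //=; left.
by elim/big_ind: _ => //= [X Y IHX IHY [/IHX|/IHY] //|i _ Fit]; exists i.
Qed.

Section PrefixEvents.
Context {R : realType} {d : measure_display} {T : measurableType d}.
Context (P : probability T R) {N : nat} (sigma : nat -> T -> 'I_N).
Hypothesis sigma_meas : forall k s, (1 <= k)%N -> measurable (cur_event sigma k s).
Implicit Types (u v : seq 'I_N) (B : pred (seq 'I_N)).

Definition prefix_event u := [set t | history sigma (size u) t = u].

Lemma prefix_event_rcons u s :
  prefix_event (rcons u s) = prefix_event u `&` cur_event sigma (size u).+1 s.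
Proof.
apply/seteqP; split=> t; rewrite /prefix_event /cur_event /= size_rcons historyS.
  by move/rcons_inj=> [-> ->].
by move=> [-> ->].
Qed.

Lemma measurable_prefix_event u : measurable (prefix_event u).
Proof.
elim/last_ind: u => [|u s IHu].
  by rewrite (_ : prefix_event [::] = setT) //; apply/seteqP; split.
by rewrite prefix_event_rcons; apply: measurableI => //; apply: sigma_meas.
Qed.

Lemma prefix_event_past u :
  prefix_event u = past_event sigma (size u).+1 [ffun i => tnth (in_tuple u) i].
Proof.
apply/seteqP; split=> t; rewrite /prefix_event /past_event /=.
  move=> u_t i; rewrite ffunE (tnth_nth (sigma 0 t)) /=.
  transitivity (nth (sigma 0 t) (history sigma (size u) t) i); last by rewrite u_t.
  by rewrite /history (nth_map 0%N) ?size_iota // nth_iota.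
move=> u_t; apply: (@eq_from_nth _ (sigma 0 t)); rewrite size_history // => i i_u.
rewrite /history (nth_map 0%N) ?size_iota // nth_iota // add0n.
by have := u_t (Ordinal i_u); rewrite ffunE (tnth_nth (sigma 0 t)).
Qed.

Definition prefix_prob u := fine (P (prefix_event u)).

Lemma prefix_probE u : P (prefix_event u) = (prefix_prob u)%:E.
Proof. by rewrite fineK // fin_num_measure //; apply: measurable_prefix_event. Qed.

Lemma prefix_prob_ge0 u : 0 <= prefix_prob u.
Proof. by rewrite fine_ge0. Qed.

Definition prefix_pred_event B n u := prefix_event u `&` [set t | B (history sigma n t)].

Lemma prefix_pred_event_rcons B n u : (size u < n)%N ->
  prefix_pred_event B n u = \big[setU/set0]_s prefix_pred_event B n (rcons u s).
Proof.
move=> u_n; apply/seteqP; split=> t; rewrite bigsetU_ordP.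
  move=> [u_t Bt]; exists (sigma (size u).+1 t).
  by rewrite /prefix_pred_event prefix_event_rcons.
by move=> [s []]; rewrite prefix_event_rcons => -[].
Qed.

Lemma trivIset_prefix_pred_event_rcons B n u :
  trivIset setT (fun s => prefix_pred_event B n (rcons u s)).
Proof.
move=> s s' _ _ [t []]; rewrite /prefix_pred_event !prefix_event_rcons.
by move=> [[_ /= <-] _] [[_ /= <-] _].
Qed.

Lemma prefix_pred_event_size B u :
  prefix_pred_event B (size u) u = if B u then prefix_event u else set0.
Proof.
apply/seteqP; split=> t; rewrite /prefix_pred_event /prefix_event /=.
  by move=> [u_t]; rewrite u_t => ->.
by case: ifP => // Bu u_t; rewrite u_t.
Qed.

Lemma measurable_prefix_pred_event B m u :
  measurable (prefix_pred_event B (size u + m) u).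
Proof.
elim: m u => [|m IHm] u.
  by rewrite addn0 prefix_pred_event_size; case: ifP => // _; apply: measurable_prefix_event.
rewrite prefix_pred_event_rcons ?addnS ?ltnS ?leq_addr //.
by apply: bigsetU_measurable => s _; rewrite -addSn -(size_rcons u s).
Qed.

Lemma measure_prefix_pred_event B m u :
  P (prefix_pred_event B (size u + m) u) =
    (tree_sum m (fun v => prefix_prob v * (B v)%:R) u)%:E.
Proof.
elim: m u => [|m IHm] u.
  rewrite addn0 prefix_pred_event_size /=.
  by case: (B u); rewrite ?measure0 ?prefix_probE ?mulr1 ?mulr0.
rewrite prefix_pred_event_rcons ?addnS ?ltnS ?leq_addr // measure_bigsetU_ord /=.
- by under eq_bigr => s _ do rewrite -addSn -(size_rcons u s) IHm; rewrite sumEFin.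
- by move=> s; rewrite -addSn -(size_rcons u s); apply: measurable_prefix_pred_event.
exact: trivIset_prefix_pred_event_rcons.
Qed.

Lemma prefix_prob_sum u : prefix_prob u = \sum_s prefix_prob (rcons u s).
Proof.
have := measure_prefix_pred_event predT 1 u.
rewrite (_ : prefix_pred_event _ _ _ = prefix_event u); last first.
  by apply/seteqP; split=> t // [].
by rewrite prefix_probE /= => -[->]; under eq_bigr do rewrite mulr1.
Qed.

Lemma prefix_prob_rcons_ge (alpha : R) (I : nat -> {set 'I_N}) :
  (forall k (past : {ffun 'I_k.-1 -> 'I_N}) s, (1 <= k)%N ->
     (0 < P (past_event sigma k past))%E ->
     condP P (cur_event sigma k s) (past_event sigma k past) != 0 ->
     alpha <= condP P (cur_event sigma k s) (past_event sigma k past)) ->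
  (forall k (past : {ffun 'I_k.-1 -> 'I_N}) s, (1 <= k)%N ->
     (0 < P (past_event sigma k past))%E ->
     (condP P (cur_event sigma k s) (past_event sigma k past) != 0 <-> s \in I k)) ->
  forall u s, s \in I (size u).+1 -> alpha * prefix_prob u <= prefix_prob (rcons u s).
Proof.
move=> alpha_le I_supp u s sI.
have [u_null|u_pos] := eqVneq (prefix_prob u) 0.
  by rewrite u_null mulr0 prefix_prob_ge0.
have P_u : (0 < P (past_event sigma (size u).+1 [ffun i => tnth (in_tuple u) i]))%E.
  by rewrite -prefix_event_past prefix_probE lte_fin lt0r u_pos prefix_prob_ge0.
have := alpha_le (size u).+1 _ s isT P_u ((I_supp (size u).+1 _ s isT P_u).2 sI).
rewrite /condP -prefix_event_past setIC -prefix_event_rcons -/(prefix_prob _).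
by rewrite ler_pdivlMr // lt0r u_pos prefix_prob_ge0.
Qed.

End PrefixEvents.

(** * Consensus *)

Lemma positive_entries_lb {R : realDomainType} {m n} (A : 'M[R]_(m, n)) :
  exists2 a, 0 < a <= 1 & forall i j, 0 < A i j -> a <= A i j.
Proof.
exists (\big[Num.min/1]_(ij | 0 < A ij.1 ij.2) A ij.1 ij.2).
  by apply/andP; split; [apply/bigmin_gtP | rewrite bigmin_idl ge_min lexx].
by move=> i j Aij; apply: (@bigmin_le_cond _ _ _ _ (i, j)).
Qed.

Lemma row_stochastic_exists_pos {R : realType} {N} (A : 'M[R]_N) i :
  row_stochastic A -> exists j, 0 < A i j.
Proof.
move=> [A_ge0 A_sum]; have [j /andP[_ Aij]] : exists j, true && (0 < A i j).
  by apply: psumr_neq0P => [j _|]; rewrite ?A_sum ?A_ge0 // => /eqP; rewrite oner_eq0.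
by exists j.
Qed.

Lemma disagreement_le {R : realType} {N} (x : 'cV[R]_N) :
  disagreement x <= N%:R * spread x ^+ 2.
Proof.
have -> : N%:R * spread x ^+ 2 = \sum_(j < N) spread x ^+ 2.
  by rewrite sumr_const card_ord mulr_natl.
apply: ler_sum => j _.
have N_gt0 : (0 < N)%N := leq_ltn_trans (leq0n j) (ltn_ord j).
have Nr_gt0 : 0 < N%:R :> R by rewrite ltr0n.
have -> : x j 0 - N%:R^-1 * \sum_i x i 0 = N%:R^-1 * \sum_i (x j 0 - x i 0).
  rewrite sumrB sumr_const card_ord mulrBr -[x j 0 *+ N]mulr_natl mulrA.
  by rewrite mulVf ?mul1r ?gt_eqF.
have : `|\sum_i (x j 0 - x i 0)| <= N%:R * spread x.
  have -> : N%:R * spread x = \sum_(i < N) spread x.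
    by rewrite sumr_const card_ord mulr_natl.
  apply: le_trans (ler_norm_sum _ _ _) (ler_sum _ _) => i _.
  by rewrite ler_norml spread_ub lerNl opprB spread_ub.
rewrite -ler_pdivrMl // => S_le.
rewrite -real_normK ?num_real // ler_sqr ?nnegrE ?spread_ge0 //.
by rewrite normrM ger0_norm // invr_ge0 ltW.
Qed.

Lemma prob_traj {R : realType} {d} {T : measurableType d} (P : probability T R) {N}
    (A : 'M[R]_N) (sigma : nat -> T -> 'I_N) x1 (B : pred 'cV[R]_N) n :
  (forall k s, (1 <= k)%N -> measurable (cur_event sigma k s)) ->
  P [set t | B (traj A sigma x1 n t)] =
    (tree_sum n (fun v => prefix_prob P sigma v * (B (Aprod A v *m x1))%:R) [::])%:E.
Proof.
move=> sigma_meas; rewrite -(measure_prefix_pred_event P sigma_meas _ n [::]) add0n.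
congr (P _); apply/seteqP; split=> t /=; rewrite traj_history //.
by case.
Qed.

Lemma disagreement_indicator_le {R : realType} {N} (x : 'cV[R]_N) (eps : R) : 0 < eps ->
  ((eps <= disagreement x)%R%:R : R) <= N%:R / eps * spread x ^+ 2.
Proof.
move=> eps_gt0; have [eps_le|_] := boolP (eps <= disagreement x).
  by rewrite mulrAC ler_pdivlMr // mul1r (le_trans eps_le) ?disagreement_le.
by rewrite mulr_ge0 ?divr_ge0 ?exprn_ge0 ?spread_ge0 ?ler0n // ltW.
Qed.

Section ExpectedSpread.
Context {R : realType} {N : nat} (A : 'M[R]_N) (x1 : 'cV[R]_N).
Context (I : nat -> {set 'I_N}) (p : seq 'I_N -> R) (alpha g : R) (L : nat).
Hypotheses (A_stoch : row_stochastic A) (p_ge0 : forall u, 0 <= p u)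
  (p_sum : forall u, p u = \sum_s p (rcons u s)) (alpha_gt0 : 0 < alpha)
  (g_ge0 : 0 <= g) (g_lt1 : g < 1)
  (p_step : forall u s, s \in I (size u).+1 -> alpha * p u <= p (rcons u s))
  (contracting : forall k, (1 <= k)%N -> exists w, [/\ admissible I k w, size w = L &
     forall x, spread (Aprod A w *m x) <= g * spread x]).

Let h v := spread (Aprod A v *m x1) ^+ 2.

Lemma expected_sq_spread_cvg0 :
  (fun n => tree_sum n (fun v => p v * h v) [::]) @ \oo --> 0.
Proof.
(* Capping [alpha] at 1 keeps the contraction factor [rho] nonnegative. *)
pose a := Num.min alpha 1.
have a_gt0 : 0 < a by rewrite lt_min alpha_gt0 ltr01.
have a_ge0 : 0 <= a := ltW a_gt0.
have a_le1 : a <= 1 by rewrite ge_min lexx orbT.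
have a_step u s : s \in I (size u).+1 -> a * p u <= p (rcons u s).
  by move=> sI; apply: le_trans (p_step sI); rewrite ler_wpM2r // ge_min lexx.
have h_ge0 v : 0 <= h v by rewrite exprn_ge0 ?spread_ge0.
have h_sq v x : spread (Aprod A v *m x1) <= x -> h v <= x ^+ 2.
  by move=> vx; rewrite lerXn2r ?nnegrE ?spread_ge0 ?(le_trans (spread_ge0 _) vx).
have h_rcons v s : h (rcons v s) <= h v.
  apply: h_sq; rewrite Aprod_rcons -mulmxA.
  exact/spread_row_stochastic/row_stochastic_Asub.
pose rho := 1 - a ^+ L * (1 - g ^+ 2).
have rho_01 : 0 <= rho < 1.
  have /andP[aL_gt0 aL_le1] : 0 < a ^+ L <= 1 by rewrite exprn_gt0 ?exprn_ile1.
  have /andP[g2_ge0 g2_lt1] : 0 <= g ^+ 2 < 1 by rewrite exprn_ge0 ?expr_lt1.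
  by rewrite /rho; apply/andP; split; nra.
apply: (@nonincreasing_geometric_cvg0 _ _ L rho rho_01).
- by move=> n; apply: tree_sum_ge0 => v; rewrite mulr_ge0.
- move=> m n mn; rewrite -(subnKC mn) tree_sumD /=.
  by apply: ler_tree_sum => v; apply: tree_sum_ph_le.
move=> m; apply: tree_sum_geometric => [|u]; first by case/andP: rho_01.
have [w [I_w size_w w_contr]] := contracting (ltn0Sn (size u)).
rewrite -size_w; apply: tree_sum_ph_contract => //.
- by rewrite exprn_ge0.
- by rewrite expr_le1 // ltW.
- by rewrite -size_w; apply: (p_cat_ge a_ge0 a_step).
rewrite (_ : g ^+ 2 * h u = (g * spread (Aprod A u *m x1)) ^+ 2); last by rewrite exprMn.
by apply: h_sq; rewrite Aprod_cat -mulmxA.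
Qed.

Lemma disagreement_tree_sum_cvg0 (eps : R) : 0 < eps ->
  (fun n => tree_sum n (fun v => p v * (eps <= disagreement (Aprod A v *m x1))%R%:R) [::])
    @ \oo --> 0.
Proof.
move=> eps_gt0.
apply: (@squeeze_cvgr _ _ _ _ (cst 0)
  (fun n => N%:R / eps * tree_sum n (fun v => p v * h v) [::])); last 2 first.
- exact: cvg_cst.
- by rewrite -(mulr0 (N%:R / eps)); apply: cvgMl_tmp; exact: expected_sq_spread_cvg0.
near=> n.
rewrite tree_sum_ge0 => [|v]; last by rewrite mulr_ge0.
rewrite -tree_sumZ; apply: ler_tree_sum => v; rewrite mulrCA.
apply: ler_wpM2l; first exact: p_ge0.
exact: disagreement_indicator_le.
Unshelve. all: by end_near.
Qed.

End ExpectedSpread.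

Theorem corollary3 (R : realType) (d : measure_display) (T : measurableType d)
  (P : probability T R) (N : nat) (A : 'M[R]_N) (sigma : nat -> T -> 'I_N) :
  (0 < N)%N ->
  row_stochastic A ->
  (forall k s, (1 <= k)%N -> measurable (cur_event sigma k s)) ->
  (* (a) *)
  rooted A ->
  (* (b) *)
  (exists2 alpha : R, 0 < alpha &
     forall k (past : {ffun 'I_k.-1 -> 'I_N}) s, (1 <= k)%N ->
       (0 < P (past_event sigma k past))%E ->
       condP P (cur_event sigma k s) (past_event sigma k past) != 0 ->
       alpha <= condP P (cur_event sigma k s) (past_event sigma k past)) ->
  forall I : nat -> {set 'I_N},
  (* (c) *)
  (forall k (past : {ffun 'I_k.-1 -> 'I_N}) s, (1 <= k)%N ->
       (0 < P (past_event sigma k past))%E ->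
       (condP P (cur_event sigma k s) (past_event sigma k past) != 0
        <-> s \in I k)) ->
  (* (d) *)
  (exists2 q : nat, (0 < q)%N &
     forall k, (1 <= k)%N -> \bigcup_(k <= tau < k + q) I tau = [set: 'I_N]%SET) ->
  (* (e) *)
  (exists chi : {set 'I_N},
     [/\ chi != finset.set0, chi \subset root_set A, induced_strongly_connected A chi
       & forall k, (1 <= k)%N -> chi \subset I k]) ->
  (* conclusion: consensus almost surely (in the sense defined) *)
  forall (x1 : 'cV[R]_N) (eps : R), 0 < eps ->
    (fun k : nat => P [set t | eps <= disagreement (traj A sigma x1 k t)])
      @ \oo --> 0%E.
Proof.
move=> _ A_stoch sigma_meas _ [alpha alpha_gt0 alpha_le] I I_supp [q _ I_cover]
  [chi [/set0Pn[r r_chi] chi_root _ chi_I]] x1 eps eps_gt0.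
have r_I k : (1 <= k)%N -> r \in I k.
  by move=> k1; apply: fintype.subsetP (chi_I k k1) r r_chi.
have [c A_rc] := row_stochastic_exists_pos r A_stoch.
have c_root y : connect (gedge A) c y.
  apply: connect_trans (connect1 A_rc) _.
  by have := fintype.subsetP chi_root r r_chi; rewrite inE => /forallP.
have [a /andP[a_gt0 a_le1] a_le] := positive_entries_lb A.
have [g /andP[g_ge0 g_lt1] contracting] :=
  contracting_words A_stoch a_gt0 a_le1 a_le r_I A_rc I_cover c_root.
under eq_fun do rewrite (prob_traj P A x1 (fun x => eps <= disagreement x) _ sigma_meas).
apply: cvg_EFin; first by near=> n.
apply: (disagreement_tree_sum_cvg0 x1 A_stoch (prefix_prob_ge0 P sigma)
  (prefix_prob_sum P sigma_meas) alpha_gt0 g_ge0 g_lt1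
  (prefix_prob_rcons_ge sigma_meas alpha_le I_supp) contracting eps_gt0).
Unshelve. all: by end_near.
Qed.
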